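(* Let $\mathcal{A} = (Q,\Sigma,\delta,I,F)$ be a UFA. Suppose its forward determinization has $k$ states and its backward determinization has $\ell$ states. Then there exists a graph $G=(Q,E)$ (on the state set of $\mathcal{A}$) that has at least $k$ cliques and at least $\ell$ cocliques.
   Context: A UFA is an NFA $(Q,\Sigma,\delta,I,F)$ (finite states $Q$, finite alphabet $\Sigma$, transitions $\delta\subseteq Q\times\Sigma\times Q$, initial states $I$, accepting states $F$) in which every word has at most one accepting run. For $S\subseteq Q$, $w\in\Sigma^*$: $\delta(S,w)=\{r\mid\exists q\in S.\ q\xrightarrow{w}r\}$, $\delta^{-1}(w,S)=\{r\mid \exists q\in S.\ r\xrightarrow{w} q\}$. The forward determinization has state set $\{\delta(I,w)\mid w\in\Sigma^*\}$; the backward determinization has state set $\{\delta^{-1}(w,F)\mid w\in\Sigma^*\}$. A graph is a finite simple undirected graph $(V,E)$. A clique is a set $X\subseteq V$ with every two distinct vertices adjacent; a coclique (independent set) is a set $Y\subseteq V$ with no two distinct vertices adjacent. The empty set and singletons count as both cliques and cocliques. *)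

From mathcomp Require Import all_boot.
From mathcomp Require Import boolp.
Set Implicit Arguments. Unset Strict Implicit. Unset Printing Implicit Defensive.

Section NFA.
Variables (Q S : finType).
Variable delta : Q -> S -> Q -> bool.

(* [run q w qs]: qs = [q1; ...; qn] is the sequence of states visited after
   q = q0 while reading w = [a1; ...; an], i.e. q_{i-1} -a_i-> q_i. *)
Fixpoint run (q : Q) (w : seq S) (qs : seq Q) : bool :=
  match w, qs with
  | [::], [::] => true
  | a :: w', q' :: qs' => delta q a q' && run q' w' qs'
  | _, _ => false
  end.

Definition accepting_run (I F : {set Q}) (w : seq S) (q0 : Q) (qs : seq Q) : bool :=
  [&& q0 \in I, run q0 w qs & last q0 qs \in F].

Definition unambiguous (I F : {set Q}) : Prop :=
  forall w q0 qs q0' qs',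
    accepting_run I F w q0 qs -> accepting_run I F w q0' qs' ->
    q0 :: qs = q0' :: qs'.

Definition step (X : {set Q}) (a : S) : {set Q} :=
  [set r | [exists q in X, delta q a r]].
Definition fwd (X : {set Q}) (w : seq S) : {set Q} := foldl step X w.

Definition bstep (a : S) (X : {set Q}) : {set Q} :=
  [set r | [exists q in X, delta r a q]].
Definition bwd (w : seq S) (X : {set Q}) : {set Q} := foldr bstep X w.

Definition fwd_det_states (I : {set Q}) : {set {set Q}} :=
  [set X | `[< exists w : seq S, X = fwd I w >]].
Definition bwd_det_states (F : {set Q}) : {set {set Q}} :=
  [set X | `[< exists w : seq S, X = bwd w F >]].
End NFA.

Definition simple_graph (T : finType) (e : rel T) : Prop :=
  symmetric e /\ irreflexive e.

Definition clique (T : finType) (e : rel T) (X : {set T}) : bool :=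
  [forall x in X, forall y in X, (x != y) ==> e x y].
Definition coclique (T : finType) (e : rel T) (X : {set T}) : bool :=
  [forall x in X, forall y in X, (x != y) ==> ~~ e x y].

Definition cliques (T : finType) (e : rel T) : {set {set T}} :=
  [set X | clique e X].
Definition cocliques (T : finType) (e : rel T) : {set {set T}} :=
  [set X | coclique e X].

(* Let P be the family of states of the forward determinization, i.e. the
   reachable sets delta(I, u).  Join two distinct states p, q by an edge iff
   they lie together in some member of P (the "co-occurrence graph" of P).
   Every member of P is then a clique, so the graph has at least |P| cliques.
   A set Y meeting every member of P in at most one state is a coclique.
   Unambiguity gives exactly this for the backward sets delta^{-1}(v, F):
   if p, q both lie in delta(I, u) and in delta^{-1}(v, F), then splicing
   runs yields two accepting runs of u v that agree only if p = q. *)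

From mathcomp Require Import all_boot.
From mathcomp Require Import boolp.

Set Implicit Arguments. Unset Strict Implicit. Unset Printing Implicit Defensive.

Section CooccurrenceGraph.
Variables (T : finType) (P : {set {set T}}).

Definition cooccur : rel T :=
  fun p q => (p != q) && [exists X in P, (p \in X) && (q \in X)].

Lemma cooccur_simple : simple_graph cooccur.
Proof.
split=> [p q | p]; last by rewrite /cooccur eqxx.
rewrite /cooccur eq_sym; congr (_ && _).
by apply/exists_inP/exists_inP => -[X HX /andP[Hp Hq]]; exists X; rewrite ?Hp ?Hq.
Qed.

Lemma cooccur_clique X : X \in P -> clique cooccur X.
Proof.
move=> HX; apply/forall_inP => p Hp; apply/forall_inP => q Hq.
apply/implyP => Hpq; rewrite /cooccur Hpq.
by apply/exists_inP; exists X; rewrite ?Hp ?Hq.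
Qed.

Lemma cooccur_coclique (Y : {set T}) :
  (forall X p q, X \in P -> p \in X -> q \in X -> p \in Y -> q \in Y -> p = q) ->
  coclique cooccur Y.
Proof.
move=> HY; apply/forall_inP => p Hp; apply/forall_inP => q Hq.
apply/implyP => Hpq; rewrite /cooccur Hpq /=.
apply/exists_inP => -[X HX /andP[HpX HqX]].
by move/eqP: Hpq; apply; apply: (HY X).
Qed.

Lemma card_cooccur_cliques : #|P| <= #|cliques cooccur|.
Proof.
apply: subset_leq_card; apply/subsetP => X HX.
by rewrite inE; apply: cooccur_clique.
Qed.

Lemma card_cooccur_cocliques (R : {set {set T}}) :
  (forall X Y p q, X \in P -> Y \in R ->
     p \in X -> q \in X -> p \in Y -> q \in Y -> p = q) ->
  #|R| <= #|cocliques cooccur|.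
Proof.
move=> HR; apply: subset_leq_card; apply/subsetP => Y HY.
by rewrite inE; apply: cooccur_coclique => X p q HX; apply: HR.
Qed.

End CooccurrenceGraph.

Section Runs.
Variables (Q S : finType) (delta : Q -> S -> Q -> bool).

Lemma run_size q w qs : run delta q w qs -> size qs = size w.
Proof.
elim: w q qs => [|a w IH] q [|q' qs] //= /andP[_ Hrun].
by rewrite (IH _ _ Hrun).
Qed.

Lemma run_cat q u v qs1 qs2 :
  run delta q u qs1 -> run delta (last q qs1) v qs2 ->
  run delta q (u ++ v) (qs1 ++ qs2).
Proof.
elim: u q qs1 => [|a u IH] q [|q' qs] //= /andP[Hstep Hrun] Hrun2.
by rewrite Hstep (IH _ _ Hrun Hrun2).
Qed.

Lemma fwd_run (X : {set Q}) u p : p \in fwd delta X u ->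
  exists q0 qs, [/\ q0 \in X, run delta q0 u qs & last q0 qs = p].
Proof.
elim: u X => [|a u IH] X /=; first by move=> Hp; exists p, [::].
move=> /IH [q1 [qs [Hq1 Hrun Hlast]]].
move: Hq1; rewrite inE => /exists_inP [q0 Hq0 Hstep].
by exists q0, (q1 :: qs); split => //=; rewrite Hstep Hrun.
Qed.

Lemma bwd_run (X : {set Q}) w r : r \in bwd delta w X ->
  exists qs, run delta r w qs /\ last r qs \in X.
Proof.
elim: w r => [|a w IH] r /=; first by move=> Hr; exists [::].
rewrite inE => /exists_inP [q Hq Hstep].
have [qs [Hrun Hlast]] := IH _ Hq.
by exists (q :: qs); rewrite /= Hstep Hrun.
Qed.

(* In a UFA, a forward set delta(I, u) and a backward set delta^{-1}(v, F)
   share at most one state: through a common state p the concatenated word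
   u ++ v has an accepting run whose |u|-th state is p. *)
Lemma unambiguous_fwd_bwd (I F : {set Q}) u v p q :
  unambiguous delta I F ->
  p \in fwd delta I u -> q \in fwd delta I u ->
  p \in bwd delta v F -> q \in bwd delta v F -> p = q.
Proof.
move=> Hun Hpu Hqu Hpv Hqv.
have accepting_through r : r \in fwd delta I u -> r \in bwd delta v F ->
    exists q0 qs rs, [/\ accepting_run delta I F (u ++ v) q0 (qs ++ rs),
                        size qs = size u & last q0 qs = r].
  move=> /fwd_run [q0 [qs [Hq0 Hrun Hlast]]] /bwd_run [rs [Hrun' Hlast']].
  exists q0, qs, rs; split; rewrite ?(run_size Hrun) //.
  by rewrite /accepting_run Hq0 run_cat ?Hlast //= last_cat Hlast.
have [q0 [qs [rs [Hp Hsp <-]]]] := accepting_through p Hpu Hpv.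
have [q0' [qs' [rs' [Hq Hsq <-]]]] := accepting_through q Hqu Hqv.
case: (Hun _ _ _ _ _ Hp Hq) => <- Hruns.
have := congr1 (take (size u)) Hruns.
by rewrite -{1}Hsp -Hsq !take_size_cat // => ->.
Qed.

End Runs.

Theorem lemma2 (Q S : finType) (delta : Q -> S -> Q -> bool) (I F : {set Q})
  (k l : nat) :
  unambiguous delta I F ->
  #|fwd_det_states delta I| = k ->
  #|bwd_det_states delta F| = l ->
  exists e : rel Q,
    simple_graph e /\ k <= #|cliques e| /\ l <= #|cocliques e|.
Proof.
move=> Hun <- <-.
exists (cooccur (fwd_det_states delta I)).
split; first exact: cooccur_simple.
split; first exact: card_cooccur_cliques.
apply: card_cooccur_cocliques => X Y p q.
rewrite !inE => /asboolP [u ->] /asboolP [v ->].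
exact: unambiguous_fwd_bwd.
Qed.
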